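(* Let $(X,\tau_\delta)_{\delta>0}$ be a Hilbert dilation system with $d=\dim X$, let $\mathcal E\subseteq X$ be an ellipsoid and $\epsilon\in(0,1/2)$. Then there exist closed intervals $J_1,\dots,J_d\subseteq(0,\infty)$ with $r(J_p)/l(J_p)\le\epsilon^{-2}$ for all $p$, such that $\tau_\delta\mathcal E$ is $\epsilon$-degenerate for every $\delta\in(0,\infty)\setminus\bigcup_{p=1}^dJ_p$.
   Context: Hilbert dilation system: $X$ a real Hilbert space of finite dimension $d$, $X=\bigoplus_{\nu=1}^mX_\nu$ orthogonal, $\tau_\delta|_{X_\nu}=\delta^{-\nu}\mathrm{id}$. An ellipsoid is a set $\{\sum_{i=1}^dc_i\sigma_iv_i:\sum c_i^2\le1\}$ with $\sigma_1\ge\dots\ge\sigma_d\ge0$ (principal axis lengths) and $\{v_i\}$ an orthonormal basis; it is $\epsilon$-degenerate if no principal axis length lies in $[\epsilon,\epsilon^{-1}]$. $l(J)\le r(J)$ denote the endpoints of an interval $J$. *)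

(* R : realType, X = 'rV[R]_d with the standard inner product. *)
From HB Require Import structures.
From mathcomp Require Import all_boot all_order all_algebra.
From mathcomp Require Import classical_sets reals.
Set Implicit Arguments. Unset Strict Implicit. Unset Printing Implicit Defensive.
Import Order.TTheory GRing.Theory Num.Theory.
Local Open Scope ring_scope.
Local Open Scope classical_set_scope.

Section Defs.
Variables (R : realType) (d : nat).

Definition ellipsoid_of (sigma : 'I_d -> R) (V : 'M[R]_d) : set 'rV[R]_d :=
  [set x | exists c : 'rV[R]_d,
     \sum_i (c 0 i) ^+ 2 <= 1 /\ x = \sum_i (c 0 i * sigma i) *: row i V].

Definition axes_data (sigma : 'I_d -> R) (V : 'M[R]_d) : Prop :=
  [/\ (forall i j : 'I_d, (i <= j)%N -> sigma j <= sigma i),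
      (forall i, 0 <= sigma i) & V *m V^T = 1%:M].

Definition is_ellipsoid_with (E : set 'rV[R]_d) sigma V : Prop :=
  axes_data sigma V /\ E = ellipsoid_of sigma V.

Definition is_ellipsoid (E : set 'rV[R]_d) : Prop :=
  exists sigma V, is_ellipsoid_with E sigma V.

Definition eps_degenerate (eps : R) (E : set 'rV[R]_d) : Prop :=
  exists sigma V, is_ellipsoid_with E sigma V /\
    forall i, ~ (eps <= sigma i <= eps^-1).

(* Orthogonal decomposition X = X_1 (+) ... (+) X_m, given by the orthogonal
   projections P nu onto X_(nu+1) (nu : 'I_m). *)
Definition hilbert_dilation_system (m : nat) (P : 'I_m -> 'M[R]_d) : Prop :=
  [/\ (forall nu, (P nu)^T = P nu),
      (forall nu, P nu *m P nu = P nu),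
      (forall nu mu, nu != mu -> P nu *m P mu = 0)
    & \sum_(nu < m) P nu = 1%:M].

Definition dil (m : nat) (P : 'I_m -> 'M[R]_d) (delta : R) (x : 'rV[R]_d)
  : 'rV[R]_d := \sum_(nu < m) (delta ^- nu.+1) *: (x *m P nu).

End Defs.

From HB Require Import structures.
From mathcomp Require Import all_boot all_order all_algebra.
From mathcomp Require Import classical_sets reals.
From mathcomp Require Import boolp ring lra.
Import Order.TTheory GRing.Theory Num.Theory.
Local Open Scope ring_scope.
Local Open Scope classical_set_scope.
Set Implicit Arguments. Unset Strict Implicit. Unset Printing Implicit Defensive.

(* [E] is the image of the unit ball under [diag(sigma) V], so [tau_delta E] is
   its image under [B(delta) = diag(sigma) V T(delta)], with [T(delta)] the
   matrix of [tau_delta]: an ellipsoid whose axis lengths are the singular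
   values [s_1(delta) >= ... >= s_d(delta)] of [B(delta)].  These come from the
   spectral theorem for [B^T B], proved by successively maximizing Rayleigh
   quotients.  For [delta <= delta'], [tau_delta' = tau_delta o tau_(delta'/delta)]
   and [tau_(delta'/delta)] shrinks vectors by at least [delta/delta'], so by
   Courant-Fischer [s_p(delta') <= (delta/delta') s_p(delta)].  Hence the scales
   with [s_p(delta)] in [[eps, eps^-1]] span a ratio at most [eps^-2], and [J_p]
   is [[l, l eps^-2]] with [l] their infimum. *)

Section QuadraticForms.
Variable R : realType.

Definition diagmx n (f : 'I_n -> R) : 'M[R]_n := diag_mx (\row_i f i).

Lemma diagmx_ext n (f g : 'I_n -> R) : f =1 g -> diagmx f = diagmx g.
Proof. by move=> fg; congr diag_mx; apply/rowP => i; rewrite !mxE fg. Qed.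

Lemma diagmxM n (f g : 'I_n -> R) : diagmx f *m diagmx g = diagmx (fun i => f i * g i).
Proof.
apply/matrixP => i j; rewrite mul_diag_mx !mxE.
by case: (eqVneq i j) => [->|_]; rewrite ?mulr1n ?mulr0n ?mulr0.
Qed.

Lemma tr_diagmx n (f : 'I_n -> R) : (diagmx f)^T = diagmx f.
Proof. exact: tr_diag_mx. Qed.

Lemma mul_mx_diagmxE m n (A : 'M[R]_(m, n)) f i j : (A *m diagmx f) i j = A i j * f j.
Proof. by rewrite mul_mx_diag !mxE. Qed.

Lemma mul_diagmx_mxE m n (A : 'M[R]_(m, n)) f i j : (diagmx f *m A) i j = f i * A i j.
Proof. by rewrite mul_diag_mx !mxE. Qed.

Definition sqnorm n (x : 'rV[R]_n) := (x *m x^T) 0 0.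
Definition qform n (M : 'M[R]_n) (x : 'rV[R]_n) := (x *m M *m x^T) 0 0.
Definition l1mx n (M : 'M[R]_n) := \sum_i \sum_j `|M i j|.

Lemma sqnormE n (x : 'rV[R]_n) : sqnorm x = \sum_i x 0 i ^+ 2.
Proof. by rewrite /sqnorm mxE; apply: eq_bigr => i _; rewrite mxE expr2. Qed.

Lemma sqnorm_ge0 n (x : 'rV[R]_n) : 0 <= sqnorm x.
Proof. by rewrite sqnormE; apply: sumr_ge0 => i _; rewrite sqr_ge0. Qed.

Lemma sqnorm_eq0 n (x : 'rV[R]_n) : (sqnorm x == 0) = (x == 0).
Proof.
apply/idP/idP; last by move/eqP->; rewrite /sqnorm mul0mx mxE.
rewrite sqnormE psumr_eq0; last by move=> i _; rewrite sqr_ge0.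
move/allP => x0; apply/eqP/rowP => j; rewrite mxE.
by have := x0 j (mem_index_enum j); rewrite sqrf_eq0 => /eqP.
Qed.

Lemma sqnorm_gt0 n (x : 'rV[R]_n) : x != 0 -> 0 < sqnorm x.
Proof. by move=> x0; rewrite lt_def sqnorm_eq0 x0 sqnorm_ge0. Qed.

Lemma sqnorm0 n : sqnorm (0 : 'rV[R]_n) = 0.
Proof. by rewrite /sqnorm mul0mx mxE. Qed.

Lemma sqnormZ n (a : R) (x : 'rV[R]_n) : sqnorm (a *: x) = a ^+ 2 * sqnorm x.
Proof. by rewrite /sqnorm linearZ /= -scalemxAl -scalemxAr !mxE mulrA expr2. Qed.

Lemma sqnorm_entry n (x : 'rV[R]_n) i : x 0 i ^+ 2 <= sqnorm x.
Proof.
rewrite sqnormE (bigD1 i) //= lerDl; apply: sumr_ge0 => j _; exact: sqr_ge0.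
Qed.

Lemma sqnorm_orthomx n (W : 'M[R]_n) x : W *m W^T = 1%:M ->
  sqnorm (x *m W) = sqnorm x.
Proof. by move=> WW; rewrite /sqnorm trmx_mul !mulmxA -(mulmxA x) WW mulmx1. Qed.

Lemma qformE n (M : 'M[R]_n) x :
  qform M x = \sum_i \sum_j x 0 i * M i j * x 0 j.
Proof.
rewrite /qform mxE exchange_big /=; apply: eq_bigr => j _.
by rewrite !mxE big_distrl.
Qed.

Lemma qform_gram m n (A : 'M[R]_(n, m)) x : qform (A *m A^T) x = sqnorm (x *m A).
Proof. by rewrite /qform /sqnorm trmx_mul !mulmxA. Qed.

Lemma qform_scalar_sub n (a : R) (S : 'M[R]_n) x :
  qform (a%:M - S) x = a * sqnorm x - qform S x.
Proof.
by rewrite /qform /sqnorm mulmxBr mul_mx_scalar mulmxBl -scalemxAl !mxE.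
Qed.

Lemma qform_eigen n (S : 'M[R]_n) y mu : y *m S = mu *: y -> qform S y = mu * sqnorm y.
Proof. by move=> yS; rewrite /qform yS -scalemxAl mxE. Qed.

Lemma qform_conj n (W : 'M[R]_n) S x : W *m W^T = 1%:M ->
  qform (W^T *m S *m W) (x *m W) = qform S x.
Proof.
move=> WW; rewrite /qform trmx_mul !mulmxA -(mulmxA x W) WW mulmx1.
by rewrite -(mulmxA _ W W^T) WW mulmx1.
Qed.

Lemma qform_diagmx n (f : 'I_n -> R) x : qform (diagmx f) x = \sum_i f i * x 0 i ^+ 2.
Proof.
rewrite /qform mxE; apply: eq_bigr => i _.
by rewrite mul_mx_diagmxE !mxE expr2 mulrCA mulrA.
Qed.

Lemma l1mx_ge0 n (M : 'M[R]_n) : 0 <= l1mx M.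
Proof. by apply: sumr_ge0 => i _; apply: sumr_ge0. Qed.

(* |x_i x_j| <= |x|^2 entrywise *)
Lemma qform_le n (M : 'M[R]_n) x : qform M x <= l1mx M * sqnorm x.
Proof.
rewrite qformE /l1mx big_distrl /=; apply: ler_sum => i _.
rewrite big_distrl /=; apply: ler_sum => j _.
have xi := sqnorm_entry x i; have xj := sqnorm_entry x j.
have le_xx : x 0 i * x 0 j <= sqnorm x.
  have : 0 <= (x 0 i - x 0 j) ^+ 2 by rewrite sqr_ge0.
  by nra.
have ge_xx : - sqnorm x <= x 0 i * x 0 j.
  have : 0 <= (x 0 i + x 0 j) ^+ 2 by rewrite sqr_ge0.
  by nra.
rewrite mulrAC; case: (lerP 0 (M i j)) => hM.
  by rewrite (ger0_norm hM); nra.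
by rewrite (ltr0_norm hM); nra.
Qed.

Lemma discriminant_le0 (a b c : R) : 0 <= c ->
  (forall t, 0 <= a + 2 * b * t + c * t ^+ 2) -> b ^+ 2 <= a * c.
Proof.
move=> c0 pos; case: (ltP 0 c) => [c_gt0|c_le0].
  have := pos (- b / c).
  have -> : a + 2 * b * (- b / c) + c * (- b / c) ^+ 2 = (a * c - b ^+ 2) / c.
    by field; rewrite gt_eqF.
  by rewrite pmulr_lge0 ?invr_gt0 // subr_ge0.
have c_eq0 : c = 0 by apply/eqP; rewrite eq_le c_le0 c0.
subst c; rewrite mulr0 expr2; have [->|b0] := eqVneq b 0; first by rewrite mulr0.
have := pos (- (a + 1) / (2 * b)).
have -> : a + 2 * b * (- (a + 1) / (2 * b)) + 0 * (- (a + 1) / (2 * b)) ^+ 2 = -1.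
  by field.
by rewrite oppr_ge0 ler10.
Qed.

Lemma qformD n (A : 'M[R]_n) x y t : A^T = A ->
  qform A (x + t *: y) = qform A x + 2 * (x *m A *m y^T) 0 0 * t + qform A y * t ^+ 2.
Proof.
move=> sA.
have yAx : y *m A *m x^T = x *m A *m y^T.
  rewrite [LHS]mx11_scalar [RHS]mx11_scalar; congr _%:M.
  transitivity ((y *m A *m x^T)^T 0 0); first by rewrite [RHS]mxE.
  by rewrite !trmx_mul trmxK sA mulmxA.
rewrite /qform (_ : (x + t *: y)^T = x^T + t *: y^T); last first.
  by rewrite linearD linearZ.
rewrite !mulmxDl !mulmxDr -!scalemxAl -!scalemxAr yAx !mxE.
ring.
Qed.

Lemma cauchy_schwarz n (A : 'M[R]_n) x y : A^T = A -> (forall z, 0 <= qform A z) ->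
  ((x *m A *m y^T) 0 0) ^+ 2 <= qform A x * qform A y.
Proof.
move=> sA psd; apply: discriminant_le0 => [|t]; first exact: psd.
by rewrite -qformD.
Qed.

End QuadraticForms.

Section Spectral.
Variable R : realType.

Lemma nonzero_row m n (M : 'M[R]_(m, n)) : M != 0 -> exists i, row i M != 0.
Proof.
move=> M0; have [i Mi|Mrows] := pickP (fun i => row i M != 0); first by exists i.
case/eqP: M0; apply/matrixP => i j.
by have /negbFE/eqP/rowP/(_ j) := Mrows i; rewrite !mxE.
Qed.

Lemma exists_kernel_vec n k (M : 'M[R]_(n, k)) : (\rank M < n)%N ->
  exists2 y : 'rV[R]_n, y != 0 & y *m M = 0.
Proof.
move=> rM; have : kermx M != 0.
  apply/eqP => M0; have := mxrank_ker M; rewrite M0 mxrank0 => /eqP.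
  by rewrite eq_sym subn_eq0 leqNgt rM.
case/nonzero_row => i ker_i; exists (row i (kermx M)) => //.
by apply/eqP; rewrite -sub_kermx row_sub.
Qed.

(* Cauchy-Schwarz for the form of [A] applied to [x] and [x A^-1]. *)
Lemma psd_unit_coercive n (A : 'M[R]_n) : A^T = A ->
  (forall z, 0 <= qform A z) -> A \in unitmx ->
  forall x, sqnorm x <= l1mx (invmx A) * qform A x.
Proof.
move=> sA psd Au x; set K := l1mx (invmx A).
have sAi : (invmx A)^T = invmx A by rewrite trmx_inv sA.
have x2_le : sqnorm x ^+ 2 <= qform A x * (K * sqnorm x).
  have := cauchy_schwarz x (x *m invmx A) sA psd.
  rewrite trmx_mul sAi !mulmxA -(mulmxA x A) mulmxV // mulmx1 -/(sqnorm x).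
  have -> : qform A (x *m invmx A) = qform (invmx A) x.
    by rewrite /qform trmx_mul sAi !mulmxA -(mulmxA x _ A) mulVmx // mulmx1.
  by move/le_trans; apply; rewrite ler_wpM2l ?qform_le.
have K0 := l1mx_ge0 (invmx A); have qA0 := psd x.
have [x0|xn0] := eqVneq x 0; first by rewrite x0 sqnorm0 mulr_ge0.
have := sqnorm_gt0 xn0; nra.
Qed.

Lemma rayleigh_sup n k (S : 'M[R]_n) (V : 'M[R]_(k, n)) : (k < n)%N ->
  exists mu, (forall x, x *m V^T = 0 -> qform S x <= mu * sqnorm x) /\
    forall e, 0 < e -> exists x, [/\ x != 0, x *m V^T = 0 &
      mu * sqnorm x - qform S x < e * sqnorm x].
Proof.
move=> kn; have [x0 x00 x0V] : exists2 x0 : 'rV_n, x0 != 0 & x0 *m V^T = 0.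
  by apply: exists_kernel_vec; rewrite mxrank_tr (leq_ltn_trans (rank_leq_row V)).
pose F := [set r | exists x, [/\ x != 0, x *m V^T = 0 & r = qform S x / sqnorm x]].
have supF : has_sup F.
  split; first by exists (qform S x0 / sqnorm x0), x0.
  exists (l1mx S) => _ [x [x0' _ ->]].
  by rewrite ler_pdivrMr ?sqnorm_gt0 // qform_le.
exists (sup F); split => [x xV|e e0].
  have [->|xn0] := eqVneq x 0; first by rewrite /qform !mul0mx sqnorm0 mxE mulr0.
  have /(sup_upper_bound supF) : F (qform S x / sqnorm x) by exists x.
  by rewrite ler_pdivrMr ?sqnorm_gt0.
have [_ [x [xn0 xV ->]] ltF] := sup_adherent e0 supF.
exists x; split => //; move: ltF; rewrite ltr_pdivlMr ?sqnorm_gt0 // mulrBl.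
by lra.
Qed.

(* For [mu] the supremum of the Rayleigh quotient of [S] on the orthogonal of
   the rows of [V], the positive semidefinite matrix
   [Q (mu - S) Q + V^T V], with [Q] the projection onto that orthogonal, cannot
   be invertible, and its kernel consists of eigenvectors of [S] for [mu]. *)
Section RayleighMaximum.
Variables (n k : nat) (S : 'M[R]_n) (V : 'M[R]_(k, n)) (L : 'M[R]_k) (mu : R).
Hypotheses (sS : S^T = S) (VV : V *m V^T = 1%:M) (VS : V *m S = L *m V).
Hypothesis mu_ub : forall x, x *m V^T = 0 -> qform S x <= mu * sqnorm x.
Hypothesis mu_sup : forall e, 0 < e -> exists x, [/\ x != 0, x *m V^T = 0 &
  mu * sqnorm x - qform S x < e * sqnorm x].

Let Q : 'M[R]_n := 1%:M - V^T *m V.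
Let A := Q *m (mu%:M - S) *m Q + V^T *m V.

Let QVt : Q *m V^T = 0.
Proof. by rewrite mulmxBl mul1mx -mulmxA VV mulmx1 subrr. Qed.

Let sQ : Q^T = Q.
Proof. by rewrite linearB /= trmx1 trmx_mul trmxK. Qed.

Let perpQ (x : 'rV[R]_n) : x *m V^T = 0 -> x *m Q = x.
Proof. by move=> xV; rewrite mulmxBr mulmx1 mulmxA xV mul0mx subr0. Qed.

Let sA : A^T = A.
Proof.
have sM : (mu%:M - S)^T = mu%:M - S by rewrite linearB /= tr_scalar_mx sS.
by rewrite linearD /= !trmx_mul trmxK sQ sM mulmxA.
Qed.

Let qformA (x : 'rV[R]_n) :
  qform A x = mu * sqnorm (x *m Q) - qform S (x *m Q) + sqnorm (x *m V^T).
Proof.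
rewrite -qform_scalar_sub -[sqnorm (x *m V^T)]qform_gram trmxK /qform /A.
by rewrite mulmxDr mulmxDl mxE !trmx_mul sQ !mulmxA.
Qed.

Let psdA (x : 'rV[R]_n) : 0 <= qform A x.
Proof.
rewrite qformA addr_ge0 ?sqnorm_ge0 // subr_ge0 mu_ub //.
by rewrite -mulmxA QVt mulmx0.
Qed.

Let A_singular : A \notin unitmx.
Proof.
apply/negP => Au; set K := l1mx (invmx A).
have K0 : 0 <= K := l1mx_ge0 _.
have K1 : 0 < (K + 1)^-1 by rewrite invr_gt0 ltr_wpDl.
have [x [xn0 xV lt_x]] := mu_sup K1.
have := psd_unit_coercive sA psdA Au x; rewrite -/K qformA (perpQ xV) xV sqnorm0 addr0.
have x_gt0 := sqnorm_gt0 xn0; move: (mu * _ - _) lt_x => a lt_x le_x.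
rewrite [_^-1 * _]mulrC ltr_pdivlMr ?ltr_wpDl // in lt_x.
by nra.
Qed.

Lemma rayleigh_max_eigenvector : exists y : 'rV[R]_n,
  [/\ y *m V^T = 0, sqnorm y = 1 & y *m S = mu *: y].
Proof.
have [y0 y00 y0A] : exists2 y0 : 'rV[R]_n, y0 != 0 & y0 *m A = 0.
  apply: exists_kernel_vec; rewrite ltn_neqAle rank_leq_row andbT.
  by have := A_singular; rewrite -row_free_unit /row_free.
have y0V : y0 *m V^T = 0.
  have AVt : A *m V^T = V^T by rewrite mulmxDl -!mulmxA QVt !mulmx0 add0r VV mulmx1.
  by rewrite -AVt mulmxA y0A mul0mx.
have y0MQ : y0 *m (mu%:M - S) *m Q = 0.
  by move: y0A; rewrite mulmxDr !mulmxA (perpQ y0V) y0V mul0mx addr0.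
have y0MVt : y0 *m (mu%:M - S) *m V^T = 0.
  have SVt : S *m V^T = V^T *m L^T by rewrite -[S]sS -trmx_mul VS trmx_mul.
  rewrite mulmxBr mul_mx_scalar mulmxBl -scalemxAl y0V scaler0 -mulmxA SVt.
  by rewrite mulmxA y0V mul0mx subrr.
have y0M : y0 *m (mu%:M - S) = 0.
  rewrite -[LHS]mulmx1 -(subrK (V^T *m V) 1%:M) -/Q mulmxDr y0MQ mulmxA y0MVt.
  by rewrite mul0mx addr0.
pose c := Num.sqrt (sqnorm y0); have c_gt0 : 0 < c by rewrite sqrtr_gt0 sqnorm_gt0.
exists (c^-1 *: y0); split.
- by rewrite -scalemxAl y0V scaler0.
- by rewrite sqnormZ exprVn sqr_sqrtr ?sqnorm_ge0 // mulVf // gt_eqF // sqnorm_gt0.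
- move/eqP: y0M; rewrite mulmxBr mul_mx_scalar subr_eq0 => /eqP y0S.
  by rewrite -scalemxAl -y0S scalerA mulrC -scalerA.
Qed.

End RayleighMaximum.

Lemma exists_eigenvector_perp n k (S : 'M[R]_n) (V : 'M[R]_(k, n)) (L : 'M[R]_k) :
  S^T = S -> V *m V^T = 1%:M -> V *m S = L *m V -> (k < n)%N ->
  exists y mu, [/\ y *m V^T = 0, sqnorm y = 1, y *m S = mu *: y &
    forall x, x *m V^T = 0 -> qform S x <= mu * sqnorm x].
Proof.
move=> sS VV VS kn; have [mu [mu_ub mu_sup]] := rayleigh_sup S V kn.
have [y [yV y1 yS]] := rayleigh_max_eigenvector sS VV VS mu_ub mu_sup.
by exists y, mu.
Qed.

Lemma rows_eigenE m n (V : 'M[R]_(m, n)) S (lam : 'I_m -> R) :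
  (forall i, row i V *m S = lam i *: row i V) -> V *m S = diagmx lam *m V.
Proof.
move=> eig; apply/row_matrixP => i; rewrite row_mul eig.
by apply/rowP => j; rewrite [RHS]mxE mul_diagmx_mxE !mxE.
Qed.

(* The eigenvalues are produced in decreasing order, each one maximizing the
   Rayleigh quotient on the orthogonal of the previous eigenvectors. *)
Lemma spectral_partial n (S : 'M[R]_n) : S^T = S -> forall k, (k <= n)%N ->
  exists (V : 'M[R]_(k, n)) (lam : nat -> R),
   [/\ V *m V^T = 1%:M, (forall i : 'I_k, row i V *m S = lam i *: row i V),
       (forall i j : nat, (i <= j < k)%N -> lam j <= lam i) &
       (0 < k)%N -> forall x, x *m V^T = 0 -> qform S x <= lam k.-1 * sqnorm x].
Proof.
move=> sS; elim => [_|k IH kn].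
  by exists 0, (fun _ => 0); split => //; [apply/matrixP => -[] | case].
have [V [lam [VV eig sorted_lam ub]]] := IH (ltnW kn).
have [y [mu [yV y1 yS mu_ub]]] := exists_eigenvector_perp sS VV (rows_eigenE eig) kn.
have mu_le : (0 < k)%N -> mu <= lam k.-1.
  by move=> k0; have := ub k0 y yV; rewrite (qform_eigen yS) y1 !mulr1.
pose lam' i := if i == k then mu else lam i.
rewrite -addn1; exists (col_mx V y), lam'; split.
- rewrite tr_col_mx mul_col_row VV yV [y *m y^T]mx11_scalar -/(sqnorm y) y1.
  by rewrite -[V *m y^T]trmxK trmx_mul trmxK yV trmx0 -scalar_mx_block.
- move=> i; case: (splitP i) => j ij.
    rewrite (_ : i = lshift 1 j); last exact: val_inj.
    by rewrite rowKu eig /lam' /= (ltn_eqF (ltn_ord j)).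
  rewrite (_ : i = rshift k j); last exact: val_inj.
  have row0y : row 0 y = y by apply/rowP => l; rewrite mxE.
  by rewrite rowKd /lam' /= ord1 addn0 eqxx row0y yS.
- move=> i j /andP[ij]; rewrite addn1 ltnS leq_eqVlt => /orP[/eqP jk|jk].
    subst j; rewrite /lam' eqxx; case: eqP => // /eqP ik.
    have ik' : (i < k)%N by rewrite ltn_neqAle ik.
    have k0 : (0 < k)%N by apply: leq_ltn_trans ik'.
    apply: le_trans (mu_le k0) _; apply: sorted_lam.
    by rewrite -ltnS prednK // ik' leqnn.
  rewrite /lam' (ltn_eqF jk) (ltn_eqF (leq_ltn_trans ij jk)).
  by apply: sorted_lam; rewrite ij.
- move=> _ x; rewrite tr_col_mx mul_mx_row => xVy.
  have [xV _] := eq_row_mx (etrans xVy (esym (row_mx0 _ _ _ _))).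
  by rewrite addn1 /lam' /= eqxx; exact: mu_ub.
Qed.

Lemma symmetric_spectral n (S : 'M[R]_n) : S^T = S ->
  exists (W : 'M[R]_n) (lam : nat -> R),
   [/\ W *m W^T = 1%:M, S = W^T *m diagmx (fun i => lam i) *m W &
       forall i j : nat, (i <= j < n)%N -> lam j <= lam i].
Proof.
move=> sS; have [W [lam [WW eig sorted_lam _]]] := spectral_partial sS (leqnn n).
exists W, lam; split => //.
by rewrite -mulmxA -(rows_eigenE eig) mulmxA (mulmx1C WW) mul1mx.
Qed.

End Spectral.

Section SingularValues.
Variable R : realType.

Definition ellipsoid_mx n (M : 'M[R]_n) : set 'rV[R]_n :=
  [set y | exists c, sqnorm c <= 1 /\ y = c *m M].

Lemma ellipsoid_ofE n (sigma : 'I_n -> R) (V : 'M[R]_n) :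
  ellipsoid_of sigma V = ellipsoid_mx (diagmx sigma *m V).
Proof.
have comb (c : 'rV[R]_n) :
    \sum_i (c 0 i * sigma i) *: row i V = c *m (diagmx sigma *m V).
  rewrite mulmxA (mulmx_sum_row (c *m _)); apply: eq_bigr => i _.
  by rewrite mul_mx_diagmxE.
by apply/seteqP; split => _ [c [c1 ->]]; exists c; move: c1; rewrite sqnormE comb.
Qed.

Lemma ellipsoid_mx_mulr n (M T : 'M[R]_n) :
  (fun x => x *m T) @` ellipsoid_mx M = ellipsoid_mx (M *m T).
Proof.
apply/seteqP; split; first by move=> _ [_ [c [c1 ->]] <-]; exists c; rewrite mulmxA.
by move=> _ [c [c1 ->]]; exists (c *m M); [exists c | rewrite mulmxA].
Qed.

Lemma qform_proj_le n (P : 'M[R]_n) x : P^T = P -> P *m P = P -> qform P x <= sqnorm x.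
Proof.
move=> sP PP; have : (1%:M - P) *m (1%:M - P)^T = 1%:M - P.
  by rewrite linearB /= trmx1 sP mulmxBl mul1mx mulmxBr mulmx1 PP subrr subr0.
have := sqnorm_ge0 (x *m (1%:M - P)); rewrite -qform_gram => /[swap] ->.
by rewrite qform_scalar_sub mul1r subr_ge0.
Qed.

Lemma gram_eigen_ge0 n (B W : 'M[R]_n) (lam : 'I_n -> R) : W *m W^T = 1%:M ->
  B^T *m B = W^T *m diagmx lam *m W -> forall i, 0 <= lam i.
Proof.
move=> WW BB i; have : qform (diagmx lam) (delta_mx 0 i) = lam i.
  rewrite qform_diagmx (bigD1 i) //= big1 => [|j ji].
    by rewrite mxE !eqxx mulr1n expr1n mulr1 addr0.
  by rewrite mxE (negbTE ji) mulr0n expr0n mulr0.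
rewrite -(qform_conj _ _ WW) -BB -{2}[B]trmxK qform_gram => <-.
exact: sqnorm_ge0.
Qed.

Let mulfVf (x : R) : x * x^-1 * x = x.
Proof. by have [->|x0] := eqVneq x 0; rewrite ?mulr0 // mulfV // mul1r. Qed.

(* Normalizing the columns of [M] gives a partial isometry [G] with
   [M = G diag(s)]; the zero columns of [M] are those where [s] vanishes. *)
Lemma ellipsoid_mx_gram n (M : 'M[R]_n) (s : 'I_n -> R) :
  M^T *m M = diagmx (fun i => s i ^+ 2) -> ellipsoid_mx M = ellipsoid_mx (diagmx s).
Proof.
move=> MM; pose J := diagmx (fun i => s i * (s i)^-1).
pose G := M *m diagmx (fun i => (s i)^-1).
have MJ : M *m J = M.
  apply/matrixP => r i; rewrite mul_mx_diagmxE.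
  have [si0|si] := eqVneq (s i) 0; last by rewrite mulfV // mulr1.
  have : (M^T *m M) i i == 0 by rewrite MM /diagmx !mxE eqxx mulr1n si0 expr0n.
  rewrite mxE psumr_eq0 => [/allP/(_ r (mem_index_enum r))|l _].
    by rewrite mxE -expr2 sqrf_eq0 si0 => /eqP ->; rewrite mul0r.
  by rewrite mxE -expr2 sqr_ge0.
have sJ : J^T = J := tr_diagmx _.
have JJ : J *m J = J by rewrite diagmxM; apply: diagmx_ext => i; rewrite mulrA mulfVf.
have GtG : G^T *m G = J.
  rewrite trmx_mul tr_diagmx -mulmxA (mulmxA M^T) MM !diagmxM.
  apply: diagmx_ext => i; have [->|s0] := eqVneq (s i) 0; first by rewrite invr0 !mul0r.
  by field.
have GDs : G *m diagmx s = M.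
  rewrite -mulmxA diagmxM -[RHS]MJ; congr (_ *m _).
  by apply: diagmx_ext => i; rewrite mulrC.
have JDs : J *m diagmx s = diagmx s.
  by rewrite diagmxM; apply: diagmx_ext => i; rewrite mulfVf.
have GJ : G *m J = G.
  rewrite /G -{1}MJ -!mulmxA !diagmxM; congr (_ *m _); apply: diagmx_ext => i.
  by have [->|s0] := eqVneq (s i) 0; [rewrite invr0 !mul0r | field].
clearbody G; have sGGt : (G *m G^T)^T = G *m G^T by rewrite trmx_mul trmxK.
have GGt2 : G *m G^T *m (G *m G^T) = G *m G^T.
  by rewrite -mulmxA (mulmxA G^T) GtG mulmxA GJ.
apply/seteqP; split => _ [c [c1 ->]].
- exists (c *m G); split; last by rewrite -mulmxA GDs.
  by apply: le_trans c1; rewrite -qform_gram qform_proj_le.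
- exists (c *m (J *m G^T)); split.
    apply: le_trans c1; rewrite -qform_gram trmx_mul trmxK sJ -mulmxA.
    by rewrite (mulmxA G^T) GtG !JJ qform_proj_le.
  by rewrite -GDs -!mulmxA (mulmxA G^T) GtG !JDs.
Qed.

Definition is_svd n (B W : 'M[R]_n) (s : nat -> R) : Prop :=
  [/\ W *m W^T = 1%:M, forall i, 0 <= s i,
      forall i j : nat, (i <= j < n)%N -> s j <= s i &
      B^T *m B = W^T *m diagmx (fun i => s i ^+ 2) *m W].

Lemma svd n (B : 'M[R]_n) : exists (W : 'M[R]_n) (s : nat -> R),
  is_svd B W s /\ ellipsoid_mx B = ellipsoid_mx (diagmx (fun i => s i) *m W).
Proof.
have sBB : (B^T *m B)^T = B^T *m B by rewrite trmx_mul trmxK.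
have [W [lam [WW BB sorted_lam]]] := symmetric_spectral sBB.
have lam0 := gram_eigen_ge0 WW BB.
pose s i := Num.sqrt (lam i).
have BB' : B^T *m B = W^T *m diagmx (fun i : 'I_n => s i ^+ 2) *m W.
  by rewrite BB; congr (_ *m _ *m _); apply: diagmx_ext => i; rewrite sqr_sqrtr.
exists W, s; split; first split => //.
- by move=> i; exact: sqrtr_ge0.
- move=> i j /andP[ij jn]; rewrite ler_sqrt ?sorted_lam ?ij //.
  exact: (lam0 (Ordinal (leq_ltn_trans ij jn))).
pose M := B *m W^T.
have MM : M^T *m M = diagmx (fun i : 'I_n => s i ^+ 2).
  by rewrite trmx_mul trmxK mulmxA -(mulmxA W) BB' !mulmxA WW mul1mx -mulmxA WW mulmx1.
have BM : B = M *m W by rewrite -mulmxA (mulmx1C WW) mulmx1.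
by clearbody M; rewrite BM -!ellipsoid_mx_mulr (ellipsoid_mx_gram MM).
Qed.

End SingularValues.

Section SingularValueBounds.
Variable R : realType.

Lemma pid_diagmx n r : pid_mx r = diagmx (fun i : 'I_n => ((i < r)%N)%:R) :> 'M[R]_n.
Proof.
apply/matrixP => i j; rewrite /diagmx !mxE.
have [->|ij] := eqVneq i j; first by rewrite eqxx mulr1n.
by rewrite mulr0n (negbTE (ij : nat_of_ord i != j)).
Qed.

Lemma copid_diagmx n r :
  copid_mx r = diagmx (fun i : 'I_n => ((r <= i)%N)%:R) :> 'M[R]_n.
Proof.
apply/matrixP => i j; rewrite /copid_mx pid_diagmx /diagmx !mxE.
have [->|ij] := eqVneq i j; last by rewrite !mulr0n subr0.
by rewrite !mulr1n [(r <= j)%N]leqNgt; case: (j < r)%N; rewrite /= ?subrr ?subr0.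
Qed.

Lemma qform_diagmx_ge n (f : 'I_n -> R) (b : 'rV[R]_n) c :
  (forall i, b 0 i != 0 -> c <= f i) -> c * sqnorm b <= qform (diagmx f) b.
Proof.
move=> cf; rewrite qform_diagmx sqnormE mulr_sumr; apply: ler_sum => i _.
have [->|bi] := eqVneq (b 0 i) 0; first by rewrite expr0n !mulr0.
by rewrite ler_wpM2r ?sqr_ge0 ?cf.
Qed.

Lemma qform_diagmx_le n (f : 'I_n -> R) (b : 'rV[R]_n) c :
  (forall i, b 0 i != 0 -> f i <= c) -> qform (diagmx f) b <= c * sqnorm b.
Proof.
move=> fc; rewrite qform_diagmx sqnormE mulr_sumr; apply: ler_sum => i _.
have [->|bi] := eqVneq (b 0 i) 0; first by rewrite expr0n !mulr0.
by rewrite ler_wpM2r ?sqr_ge0 ?fc.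
Qed.

Lemma exists_common_row m1 m2 n (U1 : 'M[R]_(m1, n)) (U2 : 'M[R]_(m2, n)) :
  (n < \rank U1 + \rank U2)%N ->
  exists2 z : 'rV[R]_n, z != 0 & (z <= U1)%MS && (z <= U2)%MS.
Proof.
move=> rU; have : (U1 :&: U2)%MS != 0.
  apply/eqP => U0; move: rU; rewrite -mxrank_sum_cap U0 mxrank0 addn0 ltnNge.
  by rewrite rank_leq_col.
case/nonzero_row => i zi; exists (row i (U1 :&: U2)%MS) => //.
by rewrite -sub_capmx row_sub.
Qed.

(* Courant-Fischer: the subspace spanned by the first [p+1] right singular
   vectors of [B D], pulled back by [D], meets the span of the last [n-p]
   right singular vectors of [B]. *)
Lemma singular_value_mulr_le n (B D W W' : 'M[R]_n) (s s' : nat -> R) (kap : R) :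
  D \in unitmx -> D^T = D -> 0 <= kap ->
  (forall y, sqnorm (y *m D) <= kap ^+ 2 * sqnorm y) ->
  is_svd B W s -> is_svd (B *m D) W' s' -> forall p, (p < n)%N -> s' p <= kap * s p.
Proof.
move=> Du sD kap0 Dkap [WW s0 sorted_s BB] [WW' s'0 sorted_s' BDBD] p pn.
have WW'_free : row_free (W' *m D).
  apply/row_freeP; exists (invmx D *m W'^T).
  by rewrite -mulmxA (mulmxA D) mulmxV // mul1mx.
have W_free : row_free W by apply/row_freeP; exists W^T.
have rank_sum : (n < \rank (pid_mx p.+1 *m (W' *m D) : 'M[R]_n)
                    + \rank (copid_mx p *m W : 'M[R]_n))%N.
  rewrite !mxrankMfree // rank_pid_mx // rank_copid_mx ?(ltnW pn) //.
  by rewrite addSn subnKC ?(ltnW pn).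
have [z z0 /andP[/submxP[a1 za1] /submxP[a2 za2]]] := exists_common_row rank_sum.
pose b := a1 *m (pid_mx p.+1 : 'M[R]_n); pose b2 := a2 *m copid_mx p.
have zb : z = b *m W' *m D by rewrite za1 !mulmxA.
have zb2 : z = b2 *m W by rewrite za2 mulmxA.
have b_gt0 : 0 < sqnorm b.
  rewrite -(sqnorm_orthomx _ WW') sqnorm_gt0 //.
  by apply: contraNneq z0 => bW0; rewrite zb bW0 mul0mx.
have head : s' p ^+ 2 * sqnorm b <= qform (diagmx (fun i : 'I_n => s' i ^+ 2)) b.
  apply: qform_diagmx_ge => i; rewrite /b pid_diagmx mul_mx_diagmxE.
  have [ip _|] := ltnP i p.+1; last by rewrite mulr0 eqxx.
  by apply: lerXn2r; rewrite ?nnegrE ?s'0 // sorted_s' // -ltnS ip pn.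
have tail : qform (diagmx (fun i : 'I_n => s i ^+ 2)) b2 <= s p ^+ 2 * sqnorm b2.
  apply: qform_diagmx_le => i; rewrite /b2 copid_diagmx mul_mx_diagmxE.
  have [pi _|] := leqP p i; last by rewrite mulr0 eqxx.
  by apply: lerXn2r; rewrite ?nnegrE ?s0 // sorted_s // pi ltn_ord.
have zBt : qform (diagmx (fun i : 'I_n => s' i ^+ 2)) b = sqnorm (z *m B^T).
  rewrite -(qform_conj _ _ WW') -BDBD -{2}[B *m D]trmxK qform_gram.
  by rewrite trmx_mul sD zb !mulmxA.
have zBt2 : qform (diagmx (fun i : 'I_n => s i ^+ 2)) b2 = sqnorm (z *m B^T).
  by rewrite -(qform_conj _ _ WW) -BB -zb2 -{2}[B]trmxK qform_gram.
have zD : sqnorm z <= kap ^+ 2 * sqnorm b.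
  by rewrite zb -(sqnorm_orthomx b WW'); apply: Dkap.
have b2z : sqnorm b2 = sqnorm z by rewrite zb2 (sqnorm_orthomx _ WW).
have : s' p ^+ 2 * sqnorm b <= (kap * s p) ^+ 2 * sqnorm b.
  apply: (le_trans head); rewrite zBt -zBt2 (le_trans tail) // b2z exprMn.
  by rewrite [kap ^+ 2 * _]mulrC -[_ * _ * sqnorm b]mulrA ler_wpM2l ?sqr_ge0.
by rewrite ler_pM2r // ler_sqr ?nnegrE ?mulr_ge0.
Qed.

End SingularValueBounds.

Section ScalingInterval.
Variables (R : realType) (eps : R) (f : R -> R).
Hypotheses (eps_gt0 : 0 < eps) (eps_le1 : eps <= 1).
Hypothesis f_scaling : forall dl dl', 0 < dl -> dl <= dl' -> f dl' <= dl / dl' * f dl.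

Let good := [set dl : R | 0 < dl /\ eps <= f dl <= eps^-1].

Let eps2_gt0 : 0 < eps ^+ 2. Proof. exact: exprn_gt0. Qed.
Let eps2_le1 : eps ^+ 2 <= 1. Proof. exact: exprn_ile1 (ltW eps_gt0) eps_le1. Qed.

(* [f] decays at least like [1/dl], so it cannot stay within [eps, eps^-1]
   over a ratio of scales larger than [eps^-2]. *)
Let good_ratio dl dl' : good dl -> good dl' -> dl' <= dl / eps ^+ 2.
Proof.
move=> [dl0 /andP[_ f_le]] [dl'0 /andP[f'_ge _]]; rewrite ler_pdivlMr //.
have [dl'_le|dl_lt] := lerP dl' dl; first by have := eps2_le1; nra.
have : eps <= dl / dl' / eps.
  apply: le_trans f'_ge (le_trans (f_scaling dl0 (ltW dl_lt)) _).
  by rewrite ler_wpM2l // ltW // divr_gt0.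
by rewrite !ler_pdivlMr // -expr2 mulrC.
Qed.

Lemma scaling_interval : exists l r : R, [/\ 0 < l <= r, r / l <= eps ^- 2 &
  forall dl, 0 < dl -> eps <= f dl <= eps^-1 -> l <= dl <= r].
Proof.
have [[dl0 good0]|no_good] := pselect (exists dl, good dl); last first.
  exists 1, 1; rewrite ltr01 lexx divr1 invf_ge1 //.
  by split => // dl *; case: no_good; exists dl.
have lb : lbound good (dl0 * eps ^+ 2).
  by move=> dl gdl; rewrite -ler_pdivlMr //; exact: good_ratio.
have inf_gt0 : 0 < inf good.
  apply: lt_le_trans (lb_le_inf (ex_intro _ dl0 good0) lb).
  by rewrite mulr_gt0 //; case: good0.
exists (inf good), (inf good / eps ^+ 2); split.
- by rewrite inf_gt0 ler_pdivlMr // ger_pMr.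
- by rewrite mulrAC mulfV ?gt_eqF // mul1r.
- move=> dl dl_gt0 f_dl; have gdl : good dl by [].
  rewrite (ge_inf (ex_intro _ (dl0 * eps ^+ 2) lb) gdl) /= ler_pdivlMr //.
  apply: lb_le_inf; first by exists dl0.
  by move=> dl' gdl'; rewrite -ler_pdivlMr //; exact: good_ratio.
Qed.

End ScalingInterval.

Section DilationSystem.
Variables (R : realType) (d m : nat) (P : 'I_m -> 'M[R]_d).
Hypothesis HP : hilbert_dilation_system P.

Definition gradmx (f : 'I_m -> R) : 'M[R]_d := \sum_nu f nu *: P nu.

Lemma gradmxM f g : gradmx f *m gradmx g = gradmx (fun nu => f nu * g nu).
Proof.
case: HP => _ PP Porth _; rewrite /gradmx mulmx_suml; apply: eq_bigr => nu _.
rewrite mulmx_sumr (bigD1 nu) //= big1 ?addr0 => [|mu mu_nu].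
  by rewrite -scalemxAl -scalemxAr PP scalerA.
by rewrite -scalemxAl -scalemxAr Porth ?scaler0 // eq_sym.
Qed.

Lemma gradmx1 : gradmx (fun _ => 1) = 1%:M.
Proof. by case: HP => _ _ _ <-; apply: eq_bigr => nu _; rewrite scale1r. Qed.

Lemma tr_gradmx f : (gradmx f)^T = gradmx f.
Proof.
case: HP => sP _ _ _; rewrite /gradmx linear_sum; apply: eq_bigr => nu _.
by rewrite linearZ /= sP.
Qed.

Lemma gradmx_unit f : (forall nu, f nu != 0) -> gradmx f \in unitmx.
Proof.
move=> f0; suff /mulmx1_unit[] : gradmx f *m gradmx (fun nu => (f nu)^-1) = 1%:M by [].
by rewrite gradmxM -gradmx1; congr gradmx; apply: funext => nu; rewrite mulfV.
Qed.

Lemma qform_gradmx f y : qform (gradmx f) y = \sum_nu f nu * qform (P nu) y.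
Proof.
rewrite /qform /gradmx mulmx_sumr mulmx_suml summxE; apply: eq_bigr => nu _.
by rewrite -scalemxAr -scalemxAl mxE.
Qed.

Lemma sqnorm_gradmx_le f kap y : (forall nu, 0 <= f nu <= kap) ->
  sqnorm (y *m gradmx f) <= kap ^+ 2 * sqnorm y.
Proof.
move=> f_kap; rewrite -qform_gram tr_gradmx gradmxM qform_gradmx.
have -> : sqnorm y = qform (gradmx (fun _ => 1)) y by rewrite gradmx1 /qform mulmx1.
rewrite qform_gradmx mulr_sumr; apply: ler_sum => nu _; rewrite mul1r ler_wpM2r //.
  by case: HP => sP PP _ _; rewrite -PP -{2}sP qform_gram sqnorm_ge0.
by have /andP[f0 fk] := f_kap nu; rewrite expr2 ler_pM.
Qed.

Lemma dilE delta x : dil P delta x = x *m gradmx (fun nu => delta ^- nu.+1).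
Proof.
by rewrite /dil /gradmx mulmx_sumr; apply: eq_bigr => nu _; rewrite scalemxAr.
Qed.

Lemma dil_ellipsoid_of delta (sigma : 'I_d -> R) (V : 'M[R]_d) :
  dil P delta @` ellipsoid_of sigma V =
  ellipsoid_mx (diagmx sigma *m V *m gradmx (fun nu => delta ^- nu.+1)).
Proof.
have -> : dil P delta = (fun x => x *m gradmx (fun nu => delta ^- nu.+1)).
  by apply: funext => x; exact: dilE.
by rewrite ellipsoid_ofE ellipsoid_mx_mulr.
Qed.

(* [tau_dl'] is [tau_dl] followed by the contraction [tau_(dl'/dl)]. *)
Lemma dil_singular_value_le (B W W' : 'M[R]_d) (s s' : nat -> R) dl dl' :
  0 < dl -> dl <= dl' ->
  is_svd (B *m gradmx (fun nu => dl ^- nu.+1)) W s ->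
  is_svd (B *m gradmx (fun nu => dl' ^- nu.+1)) W' s' ->
  forall p, (p < d)%N -> s' p <= dl / dl' * s p.
Proof.
move=> dl0 dl_le svdW svdW' p pd; have dl'0 : 0 < dl' := lt_le_trans dl0 dl_le.
have r0 : 0 <= dl / dl' by rewrite divr_ge0 ?ltW.
have r1 : dl / dl' <= 1 by rewrite ler_pdivrMr // mul1r.
pose D := gradmx (fun nu => (dl / dl') ^+ nu.+1).
have BD : B *m gradmx (fun nu => dl ^- nu.+1) *m D =
          B *m gradmx (fun nu => dl' ^- nu.+1).
  rewrite -mulmxA gradmxM; congr (_ *m gradmx _); apply: funext => nu.
  by rewrite expr_div_n mulrA mulVf ?mul1r // expf_neq0 // gt_eqF.
have Du : D \in unitmx.
  by apply: gradmx_unit => nu; rewrite expf_neq0 // mulf_neq0 ?invr_eq0 ?gt_eqF.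
have D_le y : sqnorm (y *m D) <= (dl / dl') ^+ 2 * sqnorm y.
  apply: sqnorm_gradmx_le => nu.
  by rewrite exprn_ge0 //= exprS ler_piMr ?exprn_ge0 ?exprn_ile1.
rewrite -BD in svdW'.
exact: (singular_value_mulr_le Du (tr_gradmx _) r0 D_le svdW svdW').
Qed.

End DilationSystem.

Unset Implicit Arguments.
Theorem lemma4p9 (R : realType) (d m : nat) (P : 'I_m -> 'M[R]_d)
  (E : set 'rV[R]_d) (eps : R) :
  hilbert_dilation_system P -> is_ellipsoid E -> 0 < eps < 2^-1 ->
  exists l r : 'I_d -> R,
    (forall p, 0 < l p <= r p /\ r p / l p <= eps ^- 2) /\
    (forall delta : R, 0 < delta -> (forall p, ~ (l p <= delta <= r p)) ->
       eps_degenerate eps (dil P delta @` E)).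
Proof.
move=> HP [sigma [V [_ ->]]] /andP[eps_gt0 eps_lt].
have eps_le1 : eps <= 1 by rewrite (le_trans (ltW eps_lt)) // invf_le1 ?ler1n.
pose B delta := diagmx sigma *m V *m gradmx P (fun nu => delta ^- nu.+1).
have svdB delta : exists Ws : 'M[R]_d * (nat -> R), is_svd (B delta) Ws.1 Ws.2 /\
    ellipsoid_mx (B delta) = ellipsoid_mx (diagmx (fun i => Ws.2 i) *m Ws.1).
  by have [W [s ?]] := svd (B delta); exists (W, s).
have [Ws {}svdB] := choice svdB.
have sv_scaling (p : 'I_d) dl dl' : 0 < dl -> dl <= dl' ->
    (Ws dl').2 p <= dl / dl' * (Ws dl).2 p.
  by move=> dl0 dl_le; apply: (dil_singular_value_le HP dl0 dl_le (svdB _).1 (svdB _).1).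
have interval (p : 'I_d) : exists lr : R * R,
    [/\ 0 < lr.1 <= lr.2, lr.2 / lr.1 <= eps ^- 2 &
     forall dl, 0 < dl -> eps <= (Ws dl).2 p <= eps^-1 -> lr.1 <= dl <= lr.2].
  by have [l [r ?]] := scaling_interval eps_gt0 eps_le1 (sv_scaling p); exists (l, r).
have [lr lrP] := choice interval.
exists (fun p => (lr p).1), (fun p => (lr p).2); split => [p|delta delta0 outside].
  by have [] := lrP p.
have [[WW s0 sorted_s _] ellB] := svdB delta.
exists (fun i : 'I_d => (Ws delta).2 i), (Ws delta).1; split.
  split; first by split => // i j ij; apply: sorted_s; rewrite ij ltn_ord.
  by rewrite dil_ellipsoid_of ellB ellipsoid_ofE.
move=> i sv_i; apply: (outside i); have [_ _ in_lr] := lrP i; exact: in_lr.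
Qed.
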